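(* Let $(G_n)$ be a sequence of graphs with $\min_{u\in V}\delta_u=\omega(\log n)$, fix $p\in[0,1]$, and for each $n$ run the $(p,\mathcal B)$-Node-Deterministic-Majority dynamics on $G_n$ from the configuration in which every node is $\mathcal R$. (Fast disruption) If $p>1/2$, then $\Pr(\mathrm{vol}(B^{(2)})=\mathrm{vol}(V))=1-o(1)$ and $\Pr(\tau=1)=1-o(1)$. (Slow disruption) If $p<1/2$, then with $c=1/2-p$, for every $K>0$, $\Pr\big(\forall t\le n^K:\ \mathrm{vol}(R^{(t)})\ge\frac{1+c}{2}\mathrm{vol}(V)\big)=1-o(1)$, and consequently $\Pr(\tau>n^K)=1-o(1)$.
   Context: $G_n=(V,E)$, $V=\{1,\dots,n\}$, $N(u)$ neighbourhood, $\delta_u=|N(u)|$, $\mathrm{vol}(S)=\sum_{v\in S}\delta_v$; asymptotics as $n\to\infty$. States in $\{\mathcal R,\mathcal B\}$; $R^{(t)},B^{(t)}$ are the sets of nodes in each state at round $t$, and $\tau=\inf\{t\ge0:\mathrm{vol}(B^{(t)})/\mathrm{vol}(V)>1/2\}$. $(p,\mathcal B)$-Node-Deterministic-Majority: in each round $t\ge1$, every node $u$ independently takes state $\mathcal B$ with probability $p$; otherwise it adopts the state held at round $t-1$ by the majority of its whole neighbourhood (ties broken by some fixed rule, e.g. uniformly at random). *)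

From HB Require Import structures.
From mathcomp Require Import all_boot all_order all_algebra.

Set Implicit Arguments. Unset Strict Implicit. Unset Printing Implicit Defensive.
Import Order.TTheory GRing.Theory Num.Theory.
Local Open Scope ring_scope.

Section NDM.
Variables (R : realFieldType) (n : nat) (G : rel 'I_n).

Definition nbh (u : 'I_n) : {set 'I_n} := [set v | G u v].
Definition deg (u : 'I_n) : nat := #|nbh u|.
Definition vol (S : {set 'I_n}) : nat := (\sum_(v in S) deg v)%N.

(* A configuration is represented by the set of nodes in state B;
   the R nodes are its complement. *)
Definition nbB (S : {set 'I_n}) (u : 'I_n) : nat := #|nbh u :&: S|.
Definition nbR (S : {set 'I_n}) (u : 'I_n) : nat := #|nbh u :\: S|.

Variables (p : R) (beta : 'I_n -> {set 'I_n} -> R).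
(* beta u S = probability that node u adopts B when its neighbourhood is tied
   in configuration S (the fixed tie-breaking rule). *)

Definition majB (S : {set 'I_n}) (u : 'I_n) : R :=
  if (nbR S u < nbB S u)%N then 1
  else if (nbB S u < nbR S u)%N then 0
  else beta u S.
Definition qB (S : {set 'I_n}) (u : 'I_n) : R := p + (1 - p) * majB S u.

Definition kernel (S S' : {set 'I_n}) : R :=
  \prod_(u : 'I_n) (if u \in S' then qB S u else 1 - qB S u).

Fixpoint path_weight (x : {set 'I_n}) (s : seq {set 'I_n}) : R :=
  if s is y :: s' then kernel x y * path_weight y s' else 1.

(* Probability of an event E on the trajectory (B^(0), ..., B^(T)) started
   from B^(0) = set0 (all nodes R). *)
Definition Pr_traj (T : nat) (E : seq {set 'I_n} -> bool) : R :=
  \sum_(s : T.-tuple {set 'I_n}) (E (set0 :: s))%:R * path_weight set0 s.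

Definition Bset (x : seq {set 'I_n}) (t : nat) : {set 'I_n} := nth set0 x t.
Definition Rset (x : seq {set 'I_n}) (t : nat) : {set 'I_n} := ~: Bset x t.

Definition hit (x : seq {set 'I_n}) (t : nat) : bool :=
  (vol [set: 'I_n] < 2 * vol (Bset x t))%N.
Definition tau_eq (x : seq {set 'I_n}) (t : nat) : bool :=
  hit x t && [forall s : 'I_t, ~~ hit x s].
Definition tau_gt (x : seq {set 'I_n}) (T : nat) : bool :=
  [forall s : 'I_T.+1, ~~ hit x s].

End NDM.

(* For p > 1/2, after the first round every node is B independently with
   probability p. Since all degrees are much larger than log n, Chernoff's bound
   and a union bound over the nodes show that every node then sees a strict B
   majority, so the second round makes every node B.
   For p < 1/2 and c = 1/2 - p, consider the invariant "every node has at most a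
   fraction (1 - c)/2 of B neighbours". It gives every node an R majority, so the
   next configuration is again a product of independent Bernoulli(p) choices, and
   the same bound shows that a round breaks the invariant with probability at most
   n^-(K+1). A union bound over n^K rounds concludes, because the invariant forces
   vol(B) <= (1 - c)/2 vol(V). *)

From Pilot Require Import Defs.
From HB Require Import structures.
From mathcomp Require Import all_boot all_order all_algebra.
From mathcomp Require Import all_classical all_reals all_analysis.
From mathcomp Require Import ring lra.
Import Order.TTheory GRing.Theory Num.Theory.
Import numFieldTopology.Exports numFieldNormedType.Exports.
Local Open Scope classical_set_scope.
Local Open Scope ring_scope.

Set Implicit Arguments. Unset Strict Implicit.

Lemma sum_tupleS (R : nmodType) (X : finType) (T : nat) (F : T.+1.-tuple X -> R) :
  \sum_(s : T.+1.-tuple X) F s = \sum_(x : X) \sum_(s : T.-tuple X) F [tuple of x :: s].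
Proof.
rewrite pair_big /= (reindex (fun xs : X * T.-tuple X => [tuple of xs.1 :: xs.2])) //=.
exists (fun s : T.+1.-tuple X => (thead s, [tuple of behead s])).
  by move=> [x s] _ /=; congr pair; apply: val_inj.
by move=> s _; rewrite [RHS](tuple_eta s).
Qed.

Lemma existsb_le_sum (R : numDomainType) (I : finType) (P : pred I) :
  [exists i, P i]%:R <= \sum_i (P i)%:R :> R.
Proof.
case: existsP => [[i Pi]|_]; last exact: sumr_ge0.
by rewrite (bigD1 i) //= Pi lerDl sumr_ge0.
Qed.

Lemma ler_indicator (R : numDomainType) (b c : bool) : (b -> c) -> b%:R <= c%:R :> R.
Proof. by case: b; case: c => // /(_ isT). Qed.

Lemma all_nth_default (T : Type) (P : pred T) (x0 : T) (s : seq T) (t : nat) :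
  P x0 -> all P s -> P (nth x0 s t).
Proof.
move=> P0 /all_nthP Ps; case: (ltnP t (size s)) => [/Ps//|st].
by rewrite nth_default.
Qed.

Lemma expR_le_quadratic (R : realType) (l : R) :
  0 <= l -> l <= 1 / 2 -> expR l <= 1 + l + 2 * l ^+ 2.
Proof.
move=> l0 l1.
have e_inv : expR l * expR (- l) = 1 by rewrite -expRD subrr expR0.
have lb : 1 - l <= expR (- l) := expR_ge1Dx (- l).
have e1l : expR l * (1 - l) <= 1 by rewrite -[leRHS]e_inv ler_wpM2l ?expR_ge0.
have : 0 <= l ^+ 2 * (1 - 2 * l) by rewrite mulr_ge0 ?sqr_ge0 //; lra.
nra.
Qed.

Lemma expR_mul_card (R : realType) (I : finType) (A : {set I}) (l : R) :
  expR (l * #|A|%:R) = \prod_i (if i \in A then expR l else 1).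
Proof.
rewrite -sumr_const mulr_sumr expR_sum big_mkcond /=.
by apply: eq_bigr => i _; rewrite mulr1.
Qed.

Section BernoulliProduct.
Variables (R : realType) (n : nat).
Implicit Types (q : 'I_n -> R) (y N : {set 'I_n}).

Definition bernoulli_prod q y : R := \prod_u (if u \in y then q u else 1 - q u).

Lemma bernoulli_prod_ge0 q y : (forall u, 0 <= q u <= 1) -> 0 <= bernoulli_prod q y.
Proof.
move=> hq; apply: prodr_ge0 => u _; have /andP[q0 q1] := hq u.
by case: ifP; rewrite // subr_ge0.
Qed.

Lemma sum_bernoulli_prod q : \sum_y bernoulli_prod q y = 1.
Proof. by rewrite -bigA_distr big1 // => u _ /=; rewrite subrKC. Qed.

Lemma bernoulli_prodC q y :
  bernoulli_prod q (~: y) = bernoulli_prod (fun u => 1 - q u) y.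
Proof. by apply: eq_bigr => u _; rewrite inE; case: (u \in y); rewrite //= subKr. Qed.

Lemma sum_bernoulli_prod_expR q N (l : R) :
  \sum_y bernoulli_prod q y * expR (l * #|N :&: y|%:R) =
  \prod_u (if u \in N then 1 + q u * (expR l - 1) else 1).
Proof.
transitivity (\sum_(y : {set 'I_n}) \prod_(u : 'I_n)
    (if u \in y then q u * (if u \in N then expR l else 1) else 1 - q u)).
  apply: eq_bigr => y _; rewrite /bernoulli_prod expR_mul_card -big_split /=.
  apply: eq_bigr => u _; rewrite inE.
  by case: (u \in y); case: (u \in N); rewrite /= ?mulr1.
rewrite -bigA_distr; apply: eq_bigr => u _ /=.
by case: (u \in N); rewrite ?mulr1; ring.
Qed.

(* Exponential Markov inequality at parameter g / 4, with expR l <= 1 + l + 2 l^2. *)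
Lemma chernoff_bernoulli_prod q N (r g : R) :
  (forall u, 0 <= q u <= 1) -> (forall u, u \in N -> q u <= r) ->
  0 <= r <= 1 -> 0 < g <= 2 ->
  \sum_y bernoulli_prod q y * ((r + g) * #|N|%:R <= #|N :&: y|%:R)%R%:R
    <= expR (- (g ^+ 2 / 8) * #|N|%:R).
Proof.
move=> hq hqr /andP[r0 r1] /andP[g0 g2].
set l := g / 4; set d := #|N|%:R; set e := expR l.
have l0 : 0 <= l by rewrite /l; lra.
have l1 : l <= 1 / 2 by rewrite /l; lra.
have e1 : 1 <= e by apply: le_trans (expR_ge1Dx l); rewrite lerDl.
have markov y : ((r + g) * d <= #|N :&: y|%:R)%R%:R
    <= expR (- (l * ((r + g) * d))) * expR (l * #|N :&: y|%:R).
  rewrite -expRD; case: (leP ((r + g) * d)) => [hy|_]; last exact: expR_ge0.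
  apply: le_trans (expR_ge1Dx _); rewrite lerDl addrC -mulrBr.
  by rewrite mulr_ge0 // subr_ge0.
have mgf : \prod_u (if u \in N then 1 + q u * (e - 1) else 1)
    <= expR (r * (e - 1) * d).
  rewrite expR_mul_card; apply: ler_prod => u _.
  case: ifP => uN; last by rewrite lexx ler01.
  have /andP[q0 q1] := hq u.
  rewrite addr_ge0 ?mulr_ge0 ?subr_ge0 //=; apply: le_trans (expR_ge1Dx _).
  by rewrite lerD2l ler_wpM2r ?subr_ge0 ?hqr.
apply: (@le_trans _ _ (expR (- (l * ((r + g) * d))) * expR (r * (e - 1) * d))).
  apply: le_trans (ler_wpM2l (expR_ge0 _) mgf).
  rewrite /e -(sum_bernoulli_prod_expR q N l) big_distrr /=.
  apply: ler_sum => y _; rewrite mulrCA.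
  by apply: ler_wpM2l; [exact: bernoulli_prod_ge0 | exact: markov].
rewrite -expRD ler_expR.
have e2 : e - 1 <= l + 2 * l ^+ 2 by have := expR_le_quadratic l0 l1; rewrite /e; lra.
have key : - (l * (r + g)) + r * (e - 1) <= - (g ^+ 2 / 8).
  have := ler_wpM2l r0 e2; have : r * l ^+ 2 <= l ^+ 2 by rewrite ler_piMl ?sqr_ge0.
  rewrite /l; nra.
have := ler_wpM2r (ler0n _ #|N|) key; rewrite -/d; nra.
Qed.

End BernoulliProduct.

Section Trajectories.
Variables (R : realType) (n : nat) (G : rel 'I_n) (p : R).
Variable beta : 'I_n -> {set 'I_n} -> R.
Hypotheses (hp0 : 0 <= p) (hp1 : p <= 1) (hbeta : forall u S, 0 <= beta u S <= 1).
Implicit Types (x y S : {set 'I_n}) (E : seq {set 'I_n} -> bool).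

Local Notation kernel := (Defs.kernel G p beta).

Lemma qB_in01 S u : 0 <= qB G p beta S u <= 1.
Proof.
have /andP[m0 m1] : 0 <= majB G beta S u <= 1.
  by rewrite /majB; do 2?case: ifP => _; rewrite ?lexx ?ler01.
rewrite /qB addr_ge0 ?mulr_ge0 ?subr_ge0 //= -[leRHS](subrK p) addrC lerD2r.
by rewrite ler_piMr ?subr_ge0.
Qed.

Lemma kernel_ge0 x y : 0 <= kernel x y.
Proof. exact: bernoulli_prod_ge0 (qB_in01 x). Qed.

Lemma kernel_sum1 x : \sum_y kernel x y = 1.
Proof. exact: sum_bernoulli_prod. Qed.

Lemma path_weight_ge0 x s : 0 <= path_weight G p beta x s.
Proof. by elim: s x => [|y s IHs] x /=; rewrite ?ler01 ?mulr_ge0 ?kernel_ge0. Qed.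

Definition Pr_from x T E : R :=
  \sum_(s : T.-tuple {set 'I_n}) (E (x :: s))%:R * path_weight G p beta x s.

Lemma Pr_traj_from T E : Pr_traj G p beta T E = Pr_from finset.set0 T E.
Proof. by []. Qed.

Lemma Pr_from0 x E : Pr_from x 0 E = (E [:: x])%:R.
Proof.
rewrite /Pr_from (big_pred1 [tuple]) /= ?mulr1 // => s.
by apply/esym/eqP; exact: tuple0.
Qed.

Lemma Pr_fromS x T E :
  Pr_from x T.+1 E = \sum_y kernel x y * Pr_from y T (fun s => E (x :: s)).
Proof.
rewrite /Pr_from sum_tupleS; apply: eq_bigr => y _; rewrite big_distrr.
by apply: eq_bigr => s _ /=; rewrite mulrCA.
Qed.

Lemma Pr_from_ge0 x T E : 0 <= Pr_from x T E.
Proof. by apply: sumr_ge0 => s _; rewrite mulr_ge0 ?path_weight_ge0. Qed.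

Lemma Pr_from_sub x T E E' : (forall s, E s -> E' s) -> Pr_from x T E <= Pr_from x T E'.
Proof.
move=> EE'; apply: ler_sum => s _; rewrite ler_wpM2r ?path_weight_ge0 //.
by case: (E _) (EE' (x :: s)) => // ->.
Qed.

Lemma Pr_from_true x T : Pr_from x T (fun=> true) = 1.
Proof.
elim: T x => [|T IHT] x; first by rewrite Pr_from0.
by rewrite Pr_fromS -[RHS](kernel_sum1 x); apply: eq_bigr => y _; rewrite IHT mulr1.
Qed.

Lemma Pr_from_le1 x T E : Pr_from x T E <= 1.
Proof. by rewrite -(Pr_from_true x T); exact: Pr_from_sub. Qed.

Lemma Pr_traj_le1 T E : Pr_traj G p beta T E <= 1.
Proof. exact: Pr_from_le1. Qed.

Lemma Pr_fromN x T E : Pr_from x T (fun s => ~~ E s) = 1 - Pr_from x T E.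
Proof.
rewrite -(Pr_from_true x T) /Pr_from -sumrB; apply: eq_bigr => s _.
by case: (E _); rewrite /= ?mul0r ?mul1r ?subr0 ?subrr.
Qed.

Lemma Pr_fromS_ge x T E (P : pred {set 'I_n}) :
  (forall y, P y -> Pr_from y T (fun s => E (x :: s)) = 1) ->
  1 - \sum_y kernel x y * (~~ P y)%:R <= Pr_from x T.+1 E.
Proof.
move=> hP; rewrite Pr_fromS -{1}(kernel_sum1 x) -sumrB; apply: ler_sum => y _.
case: (boolP (P y)) => [Py|_] /=; first by rewrite hP // mulr0 subr0 mulr1.
by rewrite mulr1 subrr mulr_ge0 ?kernel_ge0 ?Pr_from_ge0.
Qed.

Lemma Pr_from_leave_le (P : pred {set 'I_n}) (eps : R) :
  (forall S, P S -> \sum_y kernel S y * (~~ P y)%:R <= eps) ->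
  forall T x, P x -> Pr_from x T (fun s => ~~ all P s) <= T%:R * eps.
Proof.
move=> hstep; elim=> [|T IHT] x Px; first by rewrite Pr_from0 /= Px mul0r.
have eps0 : 0 <= eps.
  by apply: le_trans (hstep x Px); apply: sumr_ge0 => y _; rewrite mulr_ge0 ?kernel_ge0.
rewrite Pr_fromS; apply: (@le_trans _ _ (\sum_y kernel x y * ((~~ P y)%:R + T%:R * eps))).
  apply: ler_sum => y _; rewrite ler_wpM2l ?kernel_ge0 //.
  have -> : Pr_from y T (fun s => ~~ all P (x :: s)) = Pr_from y T (fun s => ~~ all P s).
    by rewrite /Pr_from; under eq_bigr do rewrite /= Px.
  case: (boolP (P y)) => Py /=; first by rewrite add0r IHT.
  by rewrite (le_trans (Pr_from_le1 _ _ _)) // lerDl mulr_ge0.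
under eq_bigr do rewrite mulrDr.
rewrite big_split /= -big_distrl /= kernel_sum1 mul1r -nat1r mulrDl mul1r lerD2r.
exact: hstep.
Qed.

End Trajectories.

Section MajorityDynamics.
Variables (R : realType) (n : nat) (G : rel 'I_n) (p : R).
Variable beta : 'I_n -> {set 'I_n} -> R.
Implicit Types (y S : {set 'I_n}).

Local Notation kernel := (Defs.kernel G p beta).

Lemma nbB_add_nbR S u : (nbB G S u + nbR G S u)%N = deg G u.
Proof. by rewrite /nbB /nbR /deg cardsID. Qed.

Lemma kernel_Rmajority S : (forall u, nbB G S u < nbR G S u)%N ->
  kernel S =1 bernoulli_prod (fun=> p).
Proof.
move=> hS y; apply: eq_bigr => u _.
by rewrite /qB /majB ltnNge (ltnW (hS u)) /= hS mulr0 addr0.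
Qed.

Lemma kernel_Bmajority S y : (forall u, nbR G S u < nbB G S u)%N ->
  y != [set: 'I_n]%SET -> kernel S y = 0.
Proof.
rewrite -properT => hS /properP[_ [u _ uy]].
rewrite /Defs.kernel (bigD1 u) //= (negbTE uy) /qB /majB hS.
by rewrite mulr1 subrKC subrr mul0r.
Qed.

Lemma vol_setT : vol G [set: 'I_n]%SET = (\sum_u deg G u)%N.
Proof. by apply: eq_bigl => u; rewrite inE. Qed.

Lemma vol_setC_add S : (vol G (~: S) + vol G S)%N = vol G [set: 'I_n]%SET.
Proof.
rewrite vol_setT /vol !(big_mkcond (fun u => u \in _)) -big_split /=.
by apply: eq_bigr => u _; rewrite finset.in_setC; case: (u \in S); rewrite ?addn0.
Qed.

Lemma vol_nbB S : symmetric G -> vol G S = (\sum_u nbB G S u)%N.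
Proof.
move=> Gsym; rewrite /vol /deg /nbB.
transitivity (\sum_v \sum_u ((v \in S) && G v u) : nat)%N.
  rewrite big_mkcond; apply: eq_bigr => v _; case: (v \in S); last by rewrite big1.
  rewrite -sum1_card big_mkcond; apply: eq_bigr => u _.
  by rewrite inE; case: (G v u).
rewrite exchange_big; apply: eq_bigr => u _; rewrite -sum1_card [RHS]big_mkcond.
by apply: eq_bigr => v _; rewrite !inE Gsym andbC.
Qed.

Definition chernoff_tail (g : R) : R := \sum_u expR (- (g ^+ 2 / 8) * (deg G u)%:R).

Lemma union_chernoff (r g : R) : 0 <= r <= 1 -> 0 < g <= 2 ->
  \sum_y bernoulli_prod (fun=> r) y *
    [exists u, ((r + g) * (deg G u)%:R <= #|nbh G u :&: y|%:R)%R]%:R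
  <= chernoff_tail g.
Proof.
move=> r01 g02; have r01' : forall u : 'I_n, 0 <= r <= 1 by [].
apply: (@le_trans _ _ (\sum_u \sum_y bernoulli_prod (fun=> r) y *
    ((r + g) * (deg G u)%:R <= #|nbh G u :&: y|%:R)%R%:R)).
  rewrite exchange_big; apply: ler_sum => y _; rewrite -mulr_sumr.
  by rewrite ler_wpM2l ?bernoulli_prod_ge0 ?existsb_le_sum.
by apply: ler_sum => u _; apply: chernoff_bernoulli_prod.
Qed.

End MajorityDynamics.

Section SlowDisruption.
Variables (R : realType) (n : nat) (G : rel 'I_n) (p : R).
Variable beta : 'I_n -> {set 'I_n} -> R.
Hypotheses (hp0 : 0 <= p) (hp1 : p <= 1) (hbeta : forall u S, 0 <= beta u S <= 1).
Hypothesis deg_gt0 : forall u, (0 < deg G u)%N.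
Implicit Types (y S : {set 'I_n}) (s : seq {set 'I_n}).

Definition B_fraction_le (a : R) S : bool :=
  [forall u, (nbB G S u)%:R <= a * (deg G u)%:R].

Lemma B_fraction_le_set0 a : 0 <= a -> B_fraction_le a finset.set0.
Proof. by move=> a0; apply/forallP => u; rewrite /nbB finset.setI0 cards0 mulr_ge0. Qed.

Lemma B_fraction_le_Rmajority a S u :
  a < 1 / 2 -> B_fraction_le a S -> (nbB G S u < nbR G S u)%N.
Proof.
move=> a_half /forallP/(_ u) hu; rewrite -(ltr_nat R).
have := congr1 (GRing.natmul (1 : R)) (nbB_add_nbR G S u); rewrite natrD => hdeg.
have : 0 < (deg G u)%:R :> R by rewrite ltr0n deg_gt0.
nra.
Qed.

Lemma vol_le_B_fraction a S : symmetric G -> B_fraction_le a S ->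
  (vol G S)%:R <= a * (vol G [set: 'I_n]%SET)%:R.
Proof.
move=> Gsym /forallP hS; rewrite (vol_nbB _ Gsym) vol_setT !natr_sum mulr_sumr.
exact: ler_sum.
Qed.

Lemma B_fraction_le_leave_le g : 0 < g -> p + g < 1 / 2 ->
  forall S, B_fraction_le (p + g) S ->
  \sum_y Defs.kernel G p beta S y * (~~ B_fraction_le (p + g) y)%:R
  <= chernoff_tail G g.
Proof.
move=> g0 pg S hS; have p01 : 0 <= p <= 1 by rewrite hp0 hp1.
have g02 : 0 < g <= 2 by rewrite g0 /=; lra.
apply: le_trans (union_chernoff G p01 g02); apply: ler_sum => y _.
rewrite kernel_Rmajority => [|u]; last exact: B_fraction_le_Rmajority hS.
rewrite ler_wpM2l ?bernoulli_prod_ge0 //.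
apply: ler_indicator => /forallPn[u hu]; apply/existsP; exists u.
by rewrite ltW // ltNge.
Qed.

Lemma Pr_traj_B_fraction_le g T (E : seq {set 'I_n} -> bool) :
  0 < g -> p + g < 1 / 2 -> (forall s, all (B_fraction_le (p + g)) s -> E s) ->
  1 - T%:R * chernoff_tail G g <= Pr_traj G p beta T E.
Proof.
move=> g0 pg hE; rewrite Pr_traj_from.
have a0 : 0 <= p + g by rewrite addr_ge0 // ltW.
have := Pr_from_leave_le hp0 hp1 hbeta (B_fraction_le_leave_le g0 pg) T
  (B_fraction_le_set0 a0).
have := Pr_from_sub G hp0 hp1 hbeta finset.set0 T hE.
rewrite Pr_fromN; lra.
Qed.

Lemma Rset_vol_ge a s t : symmetric G -> 0 <= a -> all (B_fraction_le a) s ->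
  (1 - a) * (vol G [set: 'I_n]%SET)%:R <= (vol G (Rset s t))%:R.
Proof.
move=> Gsym a0 hs.
have := vol_le_B_fraction Gsym (all_nth_default t (B_fraction_le_set0 a0) hs).
by rewrite /Rset /Bset -(vol_setC_add G (nth finset.set0 s t)) natrD; lra.
Qed.

Lemma tau_gt_of_B_fraction_le a s T : symmetric G -> 0 <= a <= 1 / 2 ->
  all (B_fraction_le a) s -> tau_gt G s T.
Proof.
move=> Gsym /andP[a0 a1] hs; apply/forallP => t; rewrite /hit -leqNgt -(ler_nat R) natrM.
have := vol_le_B_fraction Gsym (all_nth_default t (B_fraction_le_set0 a0) hs).
have := ler0n R (vol G [set: 'I_n]%SET); rewrite /Bset; nra.
Qed.

End SlowDisruption.

Section FastDisruption.
Variables (R : realType) (n : nat) (G : rel 'I_n) (p : R).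
Variable beta : 'I_n -> {set 'I_n} -> R.
Hypotheses (hp0 : 0 <= p) (hp1 : p <= 1) (hbeta : forall u S, 0 <= beta u S <= 1).
Hypothesis deg_gt0 : forall u, (0 < deg G u)%N.
Hypothesis p_half : 1 / 2 < p.
Implicit Types (y S : {set 'I_n}).

Definition B_majority S : bool := [forall u, nbR G S u < nbB G S u]%N.

Lemma B_majority_vol S : symmetric G -> (0 < n)%N -> B_majority S ->
  (vol G [set: 'I_n]%SET < 2 * vol G S)%N.
Proof.
move=> Gsym n0 /forallP hS; rewrite vol_setT (vol_nbB _ Gsym) big_distrr /=.
have hu u : (deg G u < 2 * nbB G S u)%N.
  by rewrite -(nbB_add_nbR G S u) mul2n -addnn ltn_add2l.
pose u0 := Ordinal n0; rewrite (bigD1 u0) // [X in (_ < X)%N](bigD1 u0) //=.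
by rewrite -addSn leq_add // leq_sum // => u _; rewrite ltnW.
Qed.

Lemma kernel_set0_not_B_majority_le :
  \sum_y Defs.kernel G p beta finset.set0 y * (~~ B_majority y)%:R
  <= chernoff_tail G (p - 1 / 2).
Proof.
have all_R u : (nbB G finset.set0 u < nbR G finset.set0 u)%N.
  by rewrite /nbB /nbR finset.setI0 finset.setD0 cards0; exact: deg_gt0.
have q01 : 0 <= 1 - p <= 1 by rewrite subr_ge0 hp1 gerBl hp0.
have g02 : 0 < p - 1 / 2 <= 2 by have := hp1; rewrite subr_gt0 p_half /=; lra.
apply: le_trans (union_chernoff G q01 g02).
rewrite (reindex_inj (@finset.setC_inj _)) /=; apply: ler_sum => y _.
rewrite kernel_Rmajority // bernoulli_prodC ler_wpM2l ?bernoulli_prod_ge0 //.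
apply: ler_indicator => /forallPn[u]; rewrite -leqNgt -(ler_nat R) => hu.
apply/existsP; exists u.
have := congr1 (GRing.natmul (1 : R)) (nbB_add_nbR G (~: y) u).
rewrite natrD /nbR finset.setDE finset.setCK in hu *.
have -> : 1 - p + (p - 1 / 2) = 1 / 2 by field.
lra.
Qed.

Lemma Pr_traj_vol_B2_full : 1 - chernoff_tail G (p - 1 / 2) <=
  Pr_traj G p beta 2 (fun x => vol G (Bset x 2) == vol G [set: 'I_n]%SET).
Proof.
rewrite Pr_traj_from; apply: le_trans (Pr_fromS_ge hp0 hp1 hbeta (P := B_majority) _).
  by rewrite lerD2l lerN2 kernel_set0_not_B_majority_le.
move=> y /forallP hy; rewrite Pr_fromS -(kernel_sum1 G p beta y); apply: eq_bigr => z _.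
rewrite Pr_from0; case: (eqVneq z [set: 'I_n]%SET) => [->|hz].
  by rewrite /Bset /= eqxx mulr1.
by rewrite kernel_Bmajority // !mul0r.
Qed.

Lemma Pr_traj_tau_eq1 : symmetric G -> (0 < n)%N ->
  1 - chernoff_tail G (p - 1 / 2) <= Pr_traj G p beta 1 (fun x => tau_eq G x 1).
Proof.
move=> Gsym n0; rewrite Pr_traj_from.
apply: le_trans (Pr_fromS_ge hp0 hp1 hbeta (P := B_majority) _).
  by rewrite lerD2l lerN2 kernel_set0_not_B_majority_le.
move=> y hy; rewrite Pr_from0; suff -> : tau_eq G [:: finset.set0; y] 1 by [].
rewrite /tau_eq /hit /Bset /= B_majority_vol //=.
by apply/forallP => t; rewrite (ord1 t) /= /vol finset.big_set0 muln0.
Qed.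

End FastDisruption.

Section Asymptotics.
Variable R : realType.

Lemma deg_gt0_of_mindeg n (G : rel 'I_n) (M : R) : 0 < M -> (1 < n)%N ->
  (forall u, M * ln n%:R <= (deg G u)%:R) -> forall u, (0 < deg G u)%N.
Proof.
move=> M0 n1 hdeg u; rewrite -(ltr_nat R); apply: lt_le_trans (hdeg u).
by rewrite mulr_gt0 // ln_gt0 // ltr1n.
Qed.

Lemma chernoff_tail_le_powR n (G : rel 'I_n) (g k : R) : 0 < g -> (0 < n)%N ->
  (forall u, 8 * (k + 1) / g ^+ 2 * ln n%:R <= (deg G u)%:R) ->
  chernoff_tail G g <= n%:R `^ (- k).
Proof.
move=> g0 n0 hdeg; have n_pos : 0 < n%:R :> R by rewrite ltr0n.
rewrite /powR gt_eqF //.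
apply: (@le_trans _ _ (\sum_(u : 'I_n) expR (- (k + 1) * ln n%:R))).
  apply: ler_sum => u _; rewrite ler_expR !mulNr lerN2.
  have -> : (k + 1) * ln n%:R = g ^+ 2 / 8 * (8 * (k + 1) / g ^+ 2 * ln n%:R).
    by field; rewrite gt_eqF.
  by apply: ler_wpM2l; rewrite ?divr_ge0 ?sqr_ge0.
have n_posE : (n%:R : R) \is Num.pos by rewrite posrE.
rewrite sumr_const card_ord -(mulr_natl (expR _)) -{1}(lnK n_posE) -expRD.
by have -> : ln n%:R + - (k + 1) * ln n%:R = - k * ln n%:R by ring.
Qed.

Lemma chernoff_tail_le_inv n (G : rel 'I_n) (g : R) : 0 < g -> (0 < n)%N ->
  (forall u, 8 * (1 + 1) / g ^+ 2 * ln n%:R <= (deg G u)%:R) ->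
  chernoff_tail G g <= n%:R^-1.
Proof. by move=> g0 n0 hdeg; rewrite -(powR_inv1 (ler0n R n)) chernoff_tail_le_powR. Qed.

Lemma truncn_powR_mul_chernoff_tail_le n (G : rel 'I_n) (g K : R) : 0 < g -> (0 < n)%N ->
  (forall u, 8 * (K + 1 + 1) / g ^+ 2 * ln n%:R <= (deg G u)%:R) ->
  (Num.truncn (n%:R `^ K))%:R * chernoff_tail G g <= n%:R^-1.
Proof.
move=> g0 n0 hdeg; have n_neq0 : (n%:R : R) != 0 by rewrite pnatr_eq0 -lt0n.
rewrite -(powR_inv1 (ler0n R n)) (_ : -1 = K + - (K + 1)); last by ring.
rewrite powRD ?n_neq0 ?implybT //; apply: ler_pM.
- exact: ler0n.
- by apply: sumr_ge0 => u _; exact: expR_ge0.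
- by rewrite truncn_le powR_ge0.
- exact: chernoff_tail_le_powR.
Qed.

Lemma cvg_to1_of_mindeg (G : forall n, rel 'I_n) (M : R) (f : nat -> R) :
  (\forall n \near \oo, forall u : 'I_n, M * ln n%:R <= (deg (G n) u)%:R) ->
  (forall m, (1 < m)%N -> (forall u, M * ln m%:R <= (deg (G m) u)%:R) ->
     1 - m%:R^-1 <= f m <= 1) ->
  f @ \oo --> (1 : R).
Proof.
move=> Hmindeg hf; have f_near : \forall m \near \oo, 1 - m%:R^-1 <= f m <= 1.
  by apply: filterS2 Hmindeg (nbhs_infty_ge 2) => m hdeg m1; exact: hf.
apply: (squeeze_cvgr f_near); last exact: cvg_cst.
rewrite -[X in _ --> X]subr0; apply: cvgB; first exact: cvg_cst.
by rewrite -cvg_shiftS; exact: cvg_harmonic.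
Qed.

End Asymptotics.

Theorem proposition6p3 (R : realType) (G : forall n : nat, rel 'I_n)
  (Gsym : forall n, symmetric (G n)) (Girr : forall n, irreflexive (G n))
  (Hmindeg : forall M : R, 0 < M ->
     \forall n \near \oo, forall u : 'I_n, M * ln (n%:R : R) <= (deg (G n) u)%:R)
  (p : R) (hp0 : 0 <= p) (hp1 : p <= 1)
  (beta : forall n : nat, 'I_n -> {set 'I_n} -> R)
  (hbeta : forall n u S, 0 <= beta n u S <= 1) :
  (1 / 2 < p ->
     (fun n => Pr_traj (G n) p (beta n) 2
        (fun x => vol (G n) (Bset x 2) == vol (G n) [set: 'I_n]%SET)) @ \oo --> (1 : R)
   /\ (fun n => Pr_traj (G n) p (beta n) 1
        (fun x => tau_eq (G n) x 1)) @ \oo --> (1 : R))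
  /\
  (p < 1 / 2 -> forall K : R, 0 < K ->
     let c := 1 / 2 - p in
     (fun n => Pr_traj (G n) p (beta n) (Num.truncn ((n%:R : R) `^ K))
        (fun x => [forall t : 'I_(Num.truncn ((n%:R : R) `^ K)).+1,
           (1 + c) / 2 * (vol (G n) [set: 'I_n]%SET)%:R
             <= (vol (G n) (Rset x t))%:R])) @ \oo --> (1 : R)
   /\ (fun n => Pr_traj (G n) p (beta n) (Num.truncn ((n%:R : R) `^ K))
        (fun x => tau_gt (G n) x (Num.truncn ((n%:R : R) `^ K)))) @ \oo --> (1 : R)).
Proof.
have Pr_le1 m T E : Pr_traj (G m) p (beta m) T E <= 1 :=
  Pr_traj_le1 (G m) hp0 hp1 (hbeta m) T E.
split=> [p_half | p_half K K0 c].
  set g := p - 1 / 2; have g0 : 0 < g by rewrite subr_gt0.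
  have M0 : 0 < 8 * (1 + 1) / g ^+ 2 by rewrite divr_gt0 ?exprn_gt0.
  split; apply: (cvg_to1_of_mindeg (Hmindeg _ M0)) => m m1 hdeg;
    have deg0 := deg_gt0_of_mindeg M0 m1 hdeg; rewrite Pr_le1 andbT;
    apply: (le_trans (_ : _ <= 1 - chernoff_tail (G m) g));
    rewrite ?lerD2l ?lerN2 ?chernoff_tail_le_inv ?(ltnW m1) //.
  - exact: Pr_traj_vol_B2_full.
  - by apply: Pr_traj_tau_eq1; rewrite ?(ltnW m1).
have c2 : 0 < c / 2 by rewrite divr_gt0 // subr_gt0.
have M0 : 0 < 8 * (K + 1 + 1) / (c / 2) ^+ 2.
  by rewrite divr_gt0 ?mulr_gt0 ?exprn_gt0 //; lra.
have a_half : p + c / 2 < 1 / 2 by rewrite /c; lra.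
have a0 : 0 <= p + c / 2 by rewrite addr_ge0 // ltW.
split; apply: (cvg_to1_of_mindeg (Hmindeg _ M0)) => m m1 hdeg; rewrite Pr_le1 andbT;
  have deg0 := deg_gt0_of_mindeg M0 m1 hdeg;
  apply: (le_trans (_ : _ <= 1 - (Num.truncn (m%:R `^ K))%:R * chernoff_tail (G m) (c / 2)));
  rewrite ?lerD2l ?lerN2 ?truncn_powR_mul_chernoff_tail_le ?(ltnW m1) //;
  apply: (Pr_traj_B_fraction_le hp0 hp1 (hbeta m) deg0 _ c2 a_half) => s hs.
- have -> : (1 + c) / 2 = 1 - (p + c / 2) by rewrite /c; field.
  by apply/forallP => t; exact: Rset_vol_ge.
- by apply: tau_gt_of_B_fraction_le (Gsym m) _ hs; rewrite a0 ltW.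
Qed.
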